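(* Consider an exponential bottleneck game on a graph $G$, a Nash-routing $\mathbf{p}=[p_1,\dots,p_N]$ and a routing $\mathbf{p}^*=[p_1^*,\dots,p_N^*]$ of minimum social cost, and suppose $C^*=C(\mathbf{p}^* )=1$ and $L^*\ge2$. Let $\hat C=\lceil\max_i\log_2\widetilde C_i(\mathbf{p})\rceil$, $l_1^*=\log_2(L^*-1)$ and $k=\hat C-l_1^*-11$. Then every non-empty set of players $S\subseteq S^{(1)}\cup S^{(2)}\cup\dots\cup S^{(k)}$ is not self-sufficient in $\mathbf{p}$.
   Context: Player $\pi_i$ has a strategy set $\mathcal{P}_i$ of paths from $u_i$ to $v_i$; a routing is $\mathbf{p}=[p_1,\dots,p_N]$ with $p_i\in\mathcal{P}_i$. $C_e(\mathbf{p})$ is the number of paths in $\mathbf{p}$ using edge $e$; social cost $C(\mathbf{p})=\max_eC_e(\mathbf{p})$; player cost $\widetilde C_i(\mathbf{p})=\sum_{e\in p_i}2^{C_e(\mathbf{p})}$. A Nash-routing is one in which no player can strictly lower its cost by unilaterally switching to another path in its strategy set. $L^*$ is the maximum length of a path in $\mathbf{p}^*$. Stage $i$ ($1\le i\le\hat C$): $S^{(i)}$ is the set of players $\pi_j$ with $2^{\hat C-i}+2\le\widetilde C_j(\mathbf{p})\le 2^{\hat C-i+1}$. Self-sufficiency: for a set $S$ of players and $\pi_j\in S$, let $\mathbf{q}_j$ be the routing consisting only of the players in $S$, where every player of $S$ other than $\pi_j$ uses its path from $\mathbf{p}$ and $\pi_j$ uses $p_j^*$ (congestions in $\mathbf{q}_j$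 count only these paths). $S$ is self-sufficient in $\mathbf{p}$ if for every $\pi_j\in S$, $\sum_{e\in p_j^*}2^{C_e(\mathbf{q}_j)}\ge\widetilde C_j(\mathbf{p})$. *)

From Stdlib Require Import Reals.
From mathcomp Require Import all_boot.
Set Implicit Arguments. Unset Strict Implicit. Unset Printing Implicit Defensive.

Section Bottleneck.
Variables (V E : finType) (src dst : E -> V).

Fixpoint walk (u v : V) (s : seq E) : bool :=
  match s with
  | [::] => u == v
  | e :: s' => (src e == u) && walk (dst e) v s'
  end.

Definition is_path (u v : V) (s : seq E) : bool := walk u v s && uniq s.

Variable N : nat.
Definition routing := 'I_N -> seq E.

Definition cong (r : routing) (e : E) : nat := #|[set i | e \in r i]|.

Definition social_cost (r : routing) : nat := \max_(e : E) cong r e.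

Definition pcost (r : routing) (i : 'I_N) : nat := \sum_(e <- r i) 2 ^ cong r e.

Definition deviate (r : routing) (i : 'I_N) (q : seq E) : routing :=
  fun j => if j == i then q else r j.

Definition valid (P : 'I_N -> seq E -> Prop) (r : routing) : Prop :=
  forall i, P i (r i).

Definition nash (P : 'I_N -> seq E -> Prop) (r : routing) : Prop :=
  valid P r /\ forall i q, P i q -> ~ (pcost (deviate r i q) i < pcost r i).

Definition optimal (P : 'I_N -> seq E -> Prop) (r : routing) : Prop :=
  valid P r /\ forall r', valid P r' -> social_cost r <= social_cost r'.

Definition Lmax (r : routing) : nat := \max_(i : 'I_N) size (r i).

(* hat C = ceil(max_i log2 ~C_i(p)) : smallest c with max_i ~C_i(p) <= 2^c *)
Definition Chat (r : routing) : nat := up_log 2 (\max_(i : 'I_N) pcost r i).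

Definition stage (r : routing) (i : nat) : {set 'I_N} :=
  [set j | (2 ^ (Chat r - i) + 2 <= pcost r j) && (pcost r j <= 2 ^ (Chat r - i + 1))].

Definition cong_q (r rs : routing) (S : {set 'I_N}) (j : 'I_N) (e : E) : nat :=
  #|[set i in S | e \in (if i == j then rs j else r i)]|.

Definition self_sufficient (r rs : routing) (S : {set 'I_N}) : Prop :=
  forall j, j \in S -> pcost r j <= \sum_(e <- rs j) 2 ^ cong_q r rs S j e.

End Bottleneck.

Definition log2R (x : R) : R := Rdiv (ln x) (ln (IZR 2)).
Definition kR (chat L : nat) : R :=
  Rminus (Rminus (INR chat) (log2R (INR (L - 1)))) (IZR 11).

(** Sum the costs ~C_j(p) over S.  Self-sufficiency bounds this total by
    Σ_e m_e 2^(n_e + 1), where n_e and m_e count the players of S using e in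
    p and in p^*; since C^* = 1 we have m_e <= 1.  The elementary inequality
    3 m 2^(n+1) <= 24 m + 2 n 2^n (for m <= 1), together with
    Σ_e n_e 2^(n_e) <= total cost and Σ_e m_e <= |S| L^*, gives
    total <= 24 |S| L^*.  But a player of stage i <= k pays more than
    2^(Ĉ-i) >= 2^11 (L^* - 1) >= 24 L^*, a contradiction. *)

From Stdlib Require Import Reals Lra.
From mathcomp Require Import all_boot zify.

Set Implicit Arguments.
Unset Strict Implicit.
Unset Printing Implicit Defensive.

Section Log2.
Local Open Scope R_scope.

Lemma INR_expn (m d : nat) : INR (m ^ d) = INR m ^ d.
Proof. by elim: d => [|d IH] //=; rewrite expnS mult_INR IH. Qed.

Lemma ln2_gt0 : 0 < ln 2.
Proof. have := ln_lt_2; lra. Qed.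

Lemma log2R_ge0 (x : nat) : (0 < x)%N -> 0 <= log2R (INR x).
Proof.
move=> x_gt0; rewrite /log2R /Rdiv.
apply: Rmult_le_pos; last exact/Rlt_le/Rinv_0_lt_compat/ln2_gt0.
have : 1 <= INR x by apply: (le_INR 1); apply/leP.
case/Rle_lt_or_eq_dec => [lt1x | <-]; last by rewrite ln_1; lra.
by rewrite -ln_1; apply/Rlt_le/ln_increasing => //; lra.
Qed.

Lemma log2R_le_expn (x d : nat) :
  log2R (INR x) <= INR d -> (x <= 2 ^ d)%N.
Proof.
move=> le_log; apply/leP/INR_le; rewrite INR_expn; apply: Rnot_lt_le => lt_pow.
have ln_x : ln (INR x) = log2R (INR x) * ln 2.
  by rewrite /log2R; field; have := ln2_gt0; lra.
have := ln_increasing _ _ (pow_lt _ d Rlt_0_2) lt_pow.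
rewrite ln_pow; last lra.
have := ln2_gt0; nra.
Qed.

Lemma kR_stage_expn_ge (c i L : nat) :
  (2 <= L)%N -> INR i <= kR c L -> (2 ^ 11 * (L - 1) <= 2 ^ (c - i))%N.
Proof.
rewrite /kR => L_ge2 le_ik.
have log_ge0 := @log2R_ge0 (L - 1) (ltac:(lia)).
have le_ic : (i + 11 <= c)%N.
  by apply/leP/INR_le; rewrite plus_INR; simpl INR; lra.
have -> : (c - i = 11 + (c - i - 11))%N by lia.
have d_eq : INR (c - i - 11) = INR c - INR i - 11.
  by rewrite !minus_INR; try (apply/leP; lia); simpl INR; lra.
by rewrite expnD leq_mul2l log2R_le_expn ?orbT // d_eq; lra.
Qed.

End Log2.

Section Counting.
Variables (E : finType) (N : nat).
Implicit Types (r rs : routing E N) (S : {set 'I_N}).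

Definition cong_in r S (e : E) : nat := #|[set i in S | e \in r i]|.

Lemma sum_paths_double_count r S (f : E -> nat) :
  (forall j, uniq (r j)) ->
  \sum_(j in S) \sum_(e <- r j) f e = \sum_(e : E) cong_in r S e * f e.
Proof.
move=> uniq_r.
under eq_bigr => j _ do rewrite big_uniq // big_mkcond /=.
rewrite exchange_big /=; apply: eq_bigr => e _.
rewrite /cong_in -sum1_card big_distrl big_mkcond [RHS]big_mkcond /=.
by apply: eq_bigr => j _; rewrite inE mul1n; case: (j \in S); case: (e \in r j).
Qed.

Lemma cong_in_le_cong r S e : cong_in r S e <= cong r e.
Proof. by apply: subset_leq_card; apply/subsetP => i; rewrite !inE => /andP[]. Qed.

Lemma cong_q_le r rs S j e : cong_q r rs S j e <= (cong_in r S e).+1.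
Proof.
have sub : [set i in S | e \in (if i == j then rs j else r i)]
             \subset j |: [set i in S | e \in r i].
  by apply/subsetP => i; rewrite !inE; case: (i == j).
by apply: leq_trans (subset_leq_card sub) _; rewrite cardsU1 addnC -addn1 leq_add2l leq_b1.
Qed.

Lemma sum_cong_in r S :
  (forall j, uniq (r j)) -> \sum_(e : E) cong_in r S e = \sum_(j in S) size (r j).
Proof.
move=> uniq_r; under [RHS]eq_bigr => j _ do rewrite -sum1_size.
by rewrite sum_paths_double_count //; apply: eq_bigr => e _; rewrite muln1.
Qed.

Lemma sum_cong_in_expn_le_sum_pcost r S :
  (forall j, uniq (r j)) ->
  \sum_(e : E) cong_in r S e * 2 ^ cong_in r S e <= \sum_(j in S) pcost r j.
Proof.
move=> uniq_r; rewrite /pcost -sum_paths_double_count //.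
by apply: leq_sum => j _; apply: leq_sum => e _; rewrite leq_pexp2l // cong_in_le_cong.
Qed.

Lemma self_sufficient_sum_pcost_le r rs S :
  (forall j, uniq (rs j)) -> self_sufficient r rs S ->
  \sum_(j in S) pcost r j <= \sum_(e : E) cong_in rs S e * 2 ^ (cong_in r S e).+1.
Proof.
move=> uniq_rs ss; rewrite -sum_paths_double_count //.
apply: leq_sum => j jS; apply: leq_trans (ss j jS) _.
by apply: leq_sum => e _; rewrite leq_pexp2l // cong_q_le.
Qed.

(* For n >= 3 the term 2 n 2^n alone pays for 6 * 2^n; for n <= 2, 24 does. *)
Lemma three_mul_expnS_le m n :
  m <= 1 -> 3 * (m * 2 ^ n.+1) <= 24 * m + 2 * (n * 2 ^ n).
Proof.
case: m => [|[|//]] _; first by rewrite !muln0.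
rewrite expnS; case: n => [|[|[|n]]] //.
have : 0 < 2 ^ n.+3 by rewrite expn_gt0.
nia.
Qed.

Lemma self_sufficient_sum_pcost_bound r rs S :
  (forall j, uniq (r j)) -> (forall j, uniq (rs j)) ->
  social_cost rs <= 1 -> self_sufficient r rs S ->
  \sum_(j in S) pcost r j <= 24 * #|S| * Lmax rs.
Proof.
move=> uniq_r uniq_rs cost_rs ss.
have m_le1 e : cong_in rs S e <= 1.
  exact: leq_trans (cong_in_le_cong _ _ _) (leq_trans (leq_bigmax e) cost_rs).
have sum_m : \sum_(e : E) cong_in rs S e <= #|S| * Lmax rs.
  rewrite sum_cong_in // -sum_nat_const; apply: leq_sum => j _.
  exact: (leq_bigmax (F := fun i => size (rs i))).
have pointwise : 3 * \sum_(e : E) cong_in rs S e * 2 ^ (cong_in r S e).+1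
    <= 24 * \sum_(e : E) cong_in rs S e
       + 2 * \sum_(e : E) cong_in r S e * 2 ^ cong_in r S e.
  by rewrite !big_distrr -big_split; apply: leq_sum => e _; exact: three_mul_expnS_le (m_le1 e).
have := self_sufficient_sum_pcost_le uniq_rs ss.
have := sum_cong_in_expn_le_sum_pcost S uniq_r.
lia.
Qed.

End Counting.

Theorem theorem2 (V E : finType) (src dst : E -> V) (N : nat)
  (u v : 'I_N -> V) (P : 'I_N -> seq E -> Prop)
  (HP : forall i q, P i q -> is_path src dst (u i) (v i) q)
  (p pstar : routing E N)
  (Hnash : nash P p) (Hopt : optimal P pstar)
  (HC1 : social_cost pstar = 1%N) (HL : (2 <= Lmax pstar)%N) :
  forall S : {set 'I_N},
    S != set0 ->
    (forall j, j \in S -> exists i : nat,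
        (1 <= i)%N /\ Rle (INR i) (kR (Chat p) (Lmax pstar)) /\ j \in stage p i) ->
    ~ self_sufficient p pstar S.
Proof.
move=> S S_neq0 S_early S_ss.
have uniq_p j : uniq (p j) by case/andP: (HP _ _ (Hnash.1 j)).
have uniq_pstar j : uniq (pstar j) by case/andP: (HP _ _ (Hopt.1 j)).
have cost_ge j : j \in S -> (2 ^ 11 * (Lmax pstar - 1) + 2 <= pcost p j)%N.
  move=> jS; have [i [_ [le_ik]]] := S_early j jS; rewrite inE => /andP[cost_lo _].
  by apply: leq_trans cost_lo; rewrite leq_add2r kR_stage_expn_ge.
have sum_ge : (#|S| * (2 ^ 11 * (Lmax pstar - 1) + 2) <= \sum_(j in S) pcost p j)%N.
  by rewrite -sum_nat_const; apply: leq_sum.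
have := self_sufficient_sum_pcost_bound uniq_p uniq_pstar (eq_leq HC1) S_ss.
have : (0 < #|S|)%N by rewrite card_gt0.
move: sum_ge HL; nia.
Qed.
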